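(* Let $\mathcal{N}_{A\to B}$ be a quantum channel between finite-dimensional systems, let $\varepsilon\in[0,1]$ and let $k\ge1$ be an integer. Then $$C^{\varepsilon}(\mathcal{N}_{A\to B})\le -\log_2\inf\lambda,$$ where the infimum is over $\lambda\ge0$, quantum states $\rho_A$, and operators $\{Q^{y_1^k}_{AB_1^k}\}_{y_1^k\in\{0,1\}^k}$ on $A B_1\cdots B_k$ (each $B_i\cong B$) subject to: (1) $\sum_{y_1^k\in\{0,1\}^k}Q^{y_1^k}_{AB_1^k}=\rho_A\otimes I_{B_1^k}$; (2) $Q^{y_1^k}_{AB_1^k}\ge0$ for all $y_1^k$; (3) $W^\pi_{B_1^k}Q^{(y_{\pi(1)},\dots,y_{\pi(k)})}_{AB_1^k}(W^\pi_{B_1^k})^\dagger=Q^{y_1^k}_{AB_1^k}$ for all $\pi\in S_k$ and all $y_1^k$; (4) $T_{B_1^i}(Q^{y_1^k}_{AB_1^k})\ge0$ for all $i\in[k]$ and all $y_1^k$; (5) $\sum_{y_2^k}\operatorname{Tr}_A[Q^{(0,y_2,\dots,y_k)}_{AB_1^k}]\le\lambda I_{B_1^k}$; (6) $\sum_{y_k}\operatorname{Tr}_A[Q^{y_1^k}_{AB_1^k}]=\frac{1}{|B|}\sum_{y_k}\operatorname{Tr}_{AB_k}[Q^{y_1^k}_{AB_1^k}]\otimes I_{B_k}$ for all $y_1^{k-1}\in\{0,1\}^{k-1}$; (7) $\frac{1}{|B|^{k-1}}\sum_{y_2^k}\operatorname{Tr}\big[Q^{(0,y_2,\dots,y_k)}_{AB_1^k}(\Gamma^{\mathcal{N}}_{AB_1}\otimes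 I_{B_2^k})\big]\ge1-\varepsilon$.
   Context: Notation: $y_i^j=(y_i,\dots,y_j)$, $B_i^j=B_i\cdots B_j$; $W^\pi_{B_1^k}$ is the unitary permuting systems $B_1,\dots,B_k$ according to $\pi\in S_k$; $T_{B_1^i}$ denotes the partial transpose (in the standard basis) on systems $B_1,\dots,B_i$. The Choi operator is $\Gamma^{\mathcal{N}}_{AB}=\sum_{i,j=0}^{|A|-1}|i\rangle\!\langle j|_A\otimes\mathcal{N}(|i\rangle\!\langle j|)_B$ (with the reference system identified with $A$). One-shot classical capacity: for a finite message set $\mathcal{X}$, an encoding classical-quantum channel $\mathcal{E}_{X\to A}$ (i.e., states $\rho^x_A=\mathcal{E}(|x\rangle\!\langle x|)$) and a decoding POVM $\{\Lambda^{\hat x}_B\}_{\hat x\in\mathcal{X}}$, the maximal error probability is $p_{\rm err}=\max_{x\in\mathcal{X}}\sum_{\hat x\ne x}\operatorname{Tr}[\Lambda^{\hat x}_B\mathcal{N}(\rho^x_A)]$, and $C^\varepsilon(\mathcal{N})=\sup\{\log_2|\mathcal{X}|: p_{\rm err}\le\varepsilon\}$ over all $\mathcal{X},\mathcal{E},\{\Lambda^{\hat x}\}$. *)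

From HB Require Import structures.
From mathcomp Require Import all_boot all_order all_algebra.
From mathcomp Require Import all_classical all_reals.
From mathcomp Require Import fingroup perm.
From mathcomp Require Import ereal exp.
From mathcomp Require Import complex.
Import Order.TTheory GRing.Theory Num.Theory.

Set Implicit Arguments.
Unset Strict Implicit.
Unset Printing Implicit Defensive.

Local Open Scope ring_scope.

Section QuantumDefs.
Variable R : realType.

Definition rC (x : R) : R[i] := (x%:C)%C.

(** Linear operators on the finite-dimensional Hilbert space C^I, written as
    their matrix in the standard (computational) basis indexed by the finType I.
    Composite systems are indexed by products / finite function types. *)
Definition op (I : finType) := I -> I -> R[i].

Definition opI {I : finType} : op I := fun i j => (i == j)%:R.
Definition opmul {I : finType} (X Y : op I) : op I :=
  fun i j => \sum_(l : I) X i l * Y l j.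
Definition opadj {I : finType} (X : op I) : op I := fun i j => (X j i)^*.
Definition optr {I : finType} (X : op I) : R[i] := \sum_(i : I) X i i.

(** Positive semidefiniteness (Loewner order X >= 0): <v, X v> >= 0 for all v
    (in the partial order of C, i.e. real and nonnegative). *)
Definition psd {I : finType} (X : op I) : Prop :=
  forall v : I -> R[i], 0 <= \sum_(i : I) \sum_(j : I) (v i)^* * X i j * v j.
Definition ople {I : finType} (X Y : op I) : Prop := psd (fun i j => Y i j - X i j).

Definition is_state {I : finType} (rho : op I) : Prop := psd rho /\ optr rho = 1.

Definition chan (dA dB : nat) := op 'I_dA -> op 'I_dB.

Definition is_linear_map (dA dB : nat) (N : chan dA dB) : Prop :=
  forall (c : R[i]) (X Y : op 'I_dA),
    N (fun i j => c * X i j + Y i j) = (fun i j => c * N X i j + N Y i j).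

Definition trace_preserving (dA dB : nat) (N : chan dA dB) : Prop :=
  forall X : op 'I_dA, optr (N X) = optr X.

Definition completely_positive (dA dB : nat) (N : chan dA dB) : Prop :=
  forall (n : nat) (X : op ('I_n * 'I_dA)%type), psd X ->
    psd (fun (p q : 'I_n * 'I_dB) =>
           N (fun a a' => X (p.1, a) (q.1, a')) p.2 q.2).

Definition is_channel (dA dB : nat) (N : chan dA dB) : Prop :=
  [/\ is_linear_map N, trace_preserving N & completely_positive N].

(** Choi operator: Gamma = sum_{i,j} |i><j|_A (x) N(|i><j|)_B. *)
Definition choi (dA dB : nat) (N : chan dA dB) : op ('I_dA * 'I_dB)%type :=
  fun p q => N (fun i j => ((i == p.1) && (j == q.1))%:R) p.2 q.2.

Definition log2 (x : R) : R := ln x / ln 2.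

Definition elog2 (x : \bar R) : \bar R :=
  match x with
  | EFin r => if 0 < r then (log2 r)%:E else -oo%E
  | +oo%E => +oo%E
  | -oo%E => -oo%E
  end.

Definition is_povm (dB M : nat) (Lam : 'I_M -> op 'I_dB) : Prop :=
  (forall x, psd (Lam x)) /\
  (forall b b' : 'I_dB, \sum_(x : 'I_M) Lam x b b' = opI b b').

Definition perr (dA dB M : nat) (N : chan dA dB)
    (rho : 'I_M -> op 'I_dA) (Lam : 'I_M -> op 'I_dB) : R :=
  \big[Num.max/0]_(x : 'I_M)
     complex.Re (\sum_(xh : 'I_M | xh != x) optr (opmul (Lam xh) (N (rho x)))).

(** C^eps(N) = sup { log2 |X| : codes with p_err <= eps }, message sets nonempty
    finite (w.l.o.g. X = 'I_M); an encoding cq-channel is a family of states. *)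
Definition one_shot_capacity (dA dB : nat) (N : chan dA dB) (eps : R) : \bar R :=
  ereal_sup [set e : \bar R | exists (M : nat) (rho : 'I_M -> op 'I_dA)
                                     (Lam : 'I_M -> op 'I_dB),
      [/\ (0 < M)%N, (forall x, is_state (rho x)), is_povm Lam,
          perr N rho Lam <= eps & e = (log2 M%:R)%:E]].

(** Index type of B_1 ... B_k (each B_i = 'I_dB), and of y_1^k in {0,1}^k
    (0 = false, 1 = true).  Coordinate j : 'I_k stands for system B_{j+1}. *)
Definition Bk (k dB : nat) := {ffun 'I_k -> 'I_dB}.
Definition Yk (k : nat) := {ffun 'I_k -> bool}.

(** Permutation unitary W^pi on B_1^k (tensored with I_A):
    W^pi X (W^pi)^dagger has entries X(b o pi, b' o pi). *)
Definition Wperm (k dB : nat) (pi : {perm 'I_k}) : op (Bk k dB) :=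
  fun b b' => (b' == [ffun j => b (pi j)])%:R.
Definition WpermA (dA k dB : nat) (pi : {perm 'I_k}) : op ('I_dA * Bk k dB)%type :=
  fun p q => (p.1 == q.1)%:R * Wperm pi p.2 q.2.

Definition permy (k : nat) (pi : {perm 'I_k}) (y : Yk k) : Yk k :=
  [ffun j => y (pi j)].

(** Partial transpose on B_1 ... B_i (coordinates j with j < i). *)
Definition ptrans (dA k dB : nat) (i : nat) (X : op ('I_dA * Bk k dB)%type)
  : op ('I_dA * Bk k dB)%type :=
  fun p q =>
    X (p.1, [ffun j : 'I_k => if (j < i)%N then q.2 j else p.2 j])
      (q.1, [ffun j : 'I_k => if (j < i)%N then p.2 j else q.2 j]).

Definition trA (dA k dB : nat) (X : op ('I_dA * Bk k dB)%type) : op (Bk k dB) :=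
  fun b b' => \sum_(a : 'I_dA) X (a, b) (a, b').

Definition first0 (k : nat) (y : Yk k) : bool :=
  [forall j : 'I_k, (val j == 0)%N ==> ~~ y j].

Definition agree_but_last (k : nat) (y y' : Yk k) : bool :=
  [forall j : 'I_k, (val j != k.-1) ==> (y j == y' j)].

Definition setlast (k dB : nat) (b : Bk k dB) (c : 'I_dB) : Bk k dB :=
  [ffun j : 'I_k => if val j == k.-1 then c else b j].

(** b and b' agree on the B_k coordinate ("delta" of I_{B_k}) *)
Definition eqlast (k dB : nat) (b b' : Bk k dB) : bool :=
  [forall j : 'I_k, (val j == k.-1) ==> (b j == b' j)].

(** b and b' agree on B_2 ... B_k ("delta" of I_{B_2^k}) *)
Definition eqtail (k dB : nat) (b b' : Bk k dB) : bool :=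
  [forall j : 'I_k, (val j != 0)%N ==> (b j == b' j)].

(** Gamma^N_{A B_1} (x) I_{B_2^k}; the sum over j ranges over the single
    index j = 0 (system B_1) when k >= 1. *)
Definition choi_ext (dA dB k : nat) (N : chan dA dB) : op ('I_dA * Bk k dB)%type :=
  fun p q =>
    (\sum_(j : 'I_k | val j == 0%N) choi N (p.1, p.2 j) (q.1, q.2 j))
      * (eqtail p.2 q.2)%:R.

Definition sdp_feasible (dA dB : nat) (N : chan dA dB) (eps : R) (k : nat)
    (lam : R) (rho : op 'I_dA) (Q : Yk k -> op ('I_dA * Bk k dB)%type) : Prop :=
  (
   (forall p q : 'I_dA * Bk k dB,
       \sum_(y : Yk k) Q y p q = rho p.1 q.1 * (p.2 == q.2)%:R) /\
   (forall y, psd (Q y)) /\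
   (forall (pi : {perm 'I_k}) (y : Yk k),
       opmul (opmul (@WpermA dA k dB pi) (Q (permy pi y))) (opadj (@WpermA dA k dB pi)) = Q y) /\
   (forall (i : nat) (y : Yk k), (1 <= i <= k)%N -> psd (ptrans i (Q y))) /\
   ople (fun b b' => \sum_(y : Yk k | first0 y) trA (Q y) b b')
        (fun b b' => rC lam * opI b b') /\
   (forall (y : Yk k) (b b' : Bk k dB),
       \sum_(y' : Yk k | agree_but_last y y') trA (Q y') b b' =
       (dB%:R)^-1 *
         (\sum_(y' : Yk k | agree_but_last y y')
            \sum_(a : 'I_dA) \sum_(c : 'I_dB)
               Q y' (a, setlast b c) (a, setlast b' c))
         * (eqlast b b')%:R) /\
   rC (1 - eps) <=
     ((dB%:R) ^+ (k.-1))^-1 *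
       \sum_(y : Yk k | first0 y) optr (opmul (Q y) (@choi_ext dA dB k N))).

Definition sdp_inf (dA dB : nat) (N : chan dA dB) (eps : R) (k : nat) : \bar R :=
  ereal_inf [set e : \bar R | exists (lam : R) (rho : op 'I_dA)
                                     (Q : Yk k -> op ('I_dA * Bk k dB)%type),
      [/\ 0 <= lam, is_state rho, sdp_feasible N eps lam rho Q & e = lam%:E]].

End QuantumDefs.

(* Every (M, eps) code yields a feasible point with lambda = 1/M.  Let
   T_x^0 = Lam_x and T_x^1 = I - Lam_x be the binary test for message x, and put
     Q^y = 1/M sum_x rho_x^T (x) T_x^(y_1) (x) ... (x) T_x^(y_k),
     rho_A = 1/M sum_x rho_x^T.
   Summing over y_j replaces T_x^(y_j) by I, which gives (1) and (6); (3) is a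
   reindexing of the tensor factors.  Every psd matrix is a Gram matrix, so the
   Schur product theorem makes Q^y and each of its partial transposes psd,
   giving (2) and (4).  Fixing y_1 = 0 leaves Lam_x on B_1: the completeness of
   the POVM gives (5) with equality, and the identity
   tr[(rho^T (x) Lam) Gamma^N] = tr[Lam N(rho)] turns the left side of (7) into
   the average success probability, which is at least 1 - eps.  Hence
   inf lambda <= 1/M, i.e. log2 M <= - log2 inf lambda. *)

From HB Require Import structures.
From mathcomp Require Import all_boot all_order all_algebra.
From mathcomp Require Import all_classical all_reals.
From mathcomp Require Import fingroup perm.
From mathcomp Require Import ereal exp.
From mathcomp Require Import complex.
From mathcomp Require Import ring lra.
Import Order.TTheory GRing.Theory Num.Theory.

Set Implicit Arguments.
Unset Strict Implicit.
Unset Printing Implicit Defensive.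

Local Open Scope ring_scope.

(* [t = 1] and [t = 'i] show that [a + b] and ['i (a - b)] are real. *)
Lemma real_cross_adj (R : realType) (a b : R[i]) :
  (forall t : R[i], t * a + t^* * b \is Num.real) -> a = b^*.
Proof.
move=> cross_real.
have E1 : a^* + b^* = a + b.
  by have /conj_Creal := cross_real 1; rewrite rmorph1 !mul1r rmorphD.
have E2 : a^* - b^* = b - a.
  have /conj_Creal := cross_real 'i.
  rewrite conjCi rmorphD !rmorphM /= conjCi rmorphN /= conjCi opprK => E.
  have ii : 'i * 'i = -1 :> R[i] by rewrite -expr2 sqrCi.
  have -> : a^* - b^* = 'i * (- 'i * a^* + 'i * b^*).
    by rewrite mulrDr !mulrA mulrN ii; ring.
  by rewrite E mulrDr !mulrA mulrN ii; ring.
apply: (mulfI (x := 2)); first by rewrite pnatr_eq0.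
have -> : 2 * b^* = (a^* + b^*) - (a^* - b^*) by ring.
by rewrite E1 E2; ring.
Qed.

Section Sesquilinear.
Variables (R : realType) (I : finType).
Local Notation C := R[i].
Implicit Types (X Y : op R I) (u v : I -> C).

Definition sesq Y u v : C := \sum_i \sum_j (u i)^* * Y i j * v j.

Definition basisv (i0 : I) : I -> C := fun i => (i == i0)%:R.

Lemma sum_deltal i0 (f : I -> C) : \sum_i (i == i0)%:R * f i = f i0.
Proof.
rewrite (bigD1 i0) //= eqxx mul1r big1 ?addr0 // => i /negbTE ->.
by rewrite mul0r.
Qed.

Lemma sum_deltar i0 (f : I -> C) : \sum_i f i * (i == i0)%:R = f i0.
Proof. by rewrite -[RHS](sum_deltal i0); apply: eq_bigr => i _; rewrite mulrC. Qed.

Lemma sesqDl Y u1 u2 v :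
  sesq Y (fun i => u1 i + u2 i) v = sesq Y u1 v + sesq Y u2 v.
Proof.
rewrite /sesq -big_split; apply: eq_bigr => i _.
by rewrite -big_split; apply: eq_bigr => j _; rewrite rmorphD !mulrDl.
Qed.

Lemma sesqDr Y u v1 v2 :
  sesq Y u (fun i => v1 i + v2 i) = sesq Y u v1 + sesq Y u v2.
Proof.
rewrite /sesq -big_split; apply: eq_bigr => i _.
by rewrite -big_split; apply: eq_bigr => j _; rewrite mulrDr.
Qed.

Lemma sesqZl Y c u v : sesq Y (fun i => c * u i) v = c^* * sesq Y u v.
Proof.
rewrite /sesq mulr_sumr; apply: eq_bigr => i _.
by rewrite mulr_sumr; apply: eq_bigr => j _; rewrite rmorphM !mulrA.
Qed.

Lemma sesqZr Y c u v : sesq Y u (fun i => c * v i) = c * sesq Y u v.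
Proof.
rewrite /sesq mulr_sumr; apply: eq_bigr => i _.
by rewrite mulr_sumr; apply: eq_bigr => j _; rewrite mulrCA.
Qed.

Lemma sesqB X Y u v :
  sesq (fun i j => X i j - Y i j) u v = sesq X u v - sesq Y u v.
Proof.
rewrite /sesq -sumrB; apply: eq_bigr => i _.
by rewrite -sumrB; apply: eq_bigr => j _; rewrite mulrBr mulrBl.
Qed.

Lemma sesq_sum (T : Type) (s : seq T) (P : pred T) (F : T -> op R I) u v :
  sesq (fun i j => \sum_(x <- s | P x) F x i j) u v =
  \sum_(x <- s | P x) sesq (F x) u v.
Proof.
transitivity (\sum_i \sum_(x <- s | P x) \sum_j (u i)^* * F x i j * v j).
  apply: eq_bigr => i _; rewrite exchange_big /=; apply: eq_bigr => j _.
  by rewrite mulr_sumr mulr_suml.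
by rewrite exchange_big.
Qed.

Lemma sesq_basisl Y i0 v : sesq Y (basisv i0) v = \sum_j Y i0 j * v j.
Proof.
rewrite /sesq exchange_big /=; apply: eq_bigr => j _.
under eq_bigr do rewrite rmorph_nat -mulrA.
exact: sum_deltal.
Qed.

Lemma sesq_basis Y i j : sesq Y (basisv i) (basisv j) = Y i j.
Proof. by rewrite sesq_basisl sum_deltar. Qed.

Lemma sesq_shift Y v t i0 :
  sesq Y (fun i => v i + t * basisv i0 i) (fun i => v i + t * basisv i0 i) =
  sesq Y v v + t * sesq Y v (basisv i0) + t^* * sesq Y (basisv i0) v
  + t^* * t * Y i0 i0.
Proof. by rewrite sesqDl !sesqDr !sesqZl !sesqZr sesq_basis; ring. Qed.

Lemma psd_eq0 Y : (forall i j, Y i j = 0) -> psd Y.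
Proof.
by move=> Y0 v; rewrite big1 // => i _; rewrite big1 // => j _; rewrite Y0 mulr0 mul0r.
Qed.

Lemma psd_diag_ge0 Y i : psd Y -> 0 <= Y i i.
Proof. by move=> /(_ (basisv i)); rewrite -/(sesq Y _ _) sesq_basis. Qed.

(* The quadratic form along [e_j + t e_i] is real, and so are its diagonal
   terms; what remains is [t * Y j i + t^* * Y i j]. *)
Lemma psd_adj Y i j : psd Y -> Y j i = (Y i j)^*.
Proof.
move=> psdY; apply: real_cross_adj => t.
have := ger0_real (psdY (fun k => basisv j k + t * basisv i k)).
rewrite -/(sesq Y _ _) sesq_shift !sesq_basis => re.
have -> : t * Y j i + t^* * Y i j =
    (Y j j + t * Y j i + t^* * Y i j + t^* * t * Y i i)
    - Y j j - t^* * t * Y i i by ring.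
rewrite rpredB ?rpredB // ?ger0_real ?psd_diag_ge0 //.
by rewrite mulr_ge0 ?psd_diag_ge0 // mulrC mul_conjC_ge0.
Qed.

Lemma sesq_adj Y u v : psd Y -> sesq Y u v = (sesq Y v u)^*.
Proof.
move=> psdY; rewrite /sesq rmorph_sum exchange_big /=; apply: eq_bigr => j _.
rewrite rmorph_sum; apply: eq_bigr => i _.
by rewrite !rmorphM /= conjCK (psd_adj _ _ psdY); ring.
Qed.

Lemma sesq_rank1 (w : I -> C) v :
  sesq (fun i j => w i * (w j)^*) v v =
  (\sum_j (w j)^* * v j)^* * (\sum_j (w j)^* * v j).
Proof.
rewrite /sesq rmorph_sum mulr_suml; apply: eq_bigr => i _.
by rewrite mulr_sumr; apply: eq_bigr => j _; rewrite rmorphM /= conjCK; ring.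
Qed.

(* Otherwise [e_j - u Y i j e_i] with [u] large has negative norm. *)
Lemma psd_diag0_row Y i : psd Y -> Y i i = 0 -> forall j, Y i j = 0.
Proof.
move=> psdY Yii j; apply/eqP/negPn/negP => nz.
set s := Y i j in nz.
have Yji : Y j i = s^* by rewrite (psd_adj _ _ psdY).
set c := s * s^*.
have c_gt0 : 0 < c by rewrite mul_conjC_gt0.
set u := (Y j j + 1) / (2 * c).
have u_ge0 : 0 <= u.
  by rewrite divr_ge0 ?addr_ge0 ?psd_diag_ge0 // mulr_ge0 ?ler0n // ltW.
have := psdY (fun k => basisv j k + (- u * s) * basisv i k).
rewrite -/(sesq Y _ _) sesq_shift !sesq_basis Yii Yji rmorphM rmorphN /=.
rewrite (geC0_conj u_ge0).
have -> : Y j j + - u * s * s^* + - u * s^* * s + - u * s^* * (- u * s) * 0 = -1.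
  by rewrite /u /c; field; rewrite nz conjC_eq0 nz.
by rewrite ler0N1.
Qed.

Definition pivot_col Y i0 : I -> C :=
  fun j => if Y i0 i0 == 0 then 0 else Y j i0 / sqrtC (Y i0 i0).

Definition peel Y i0 : op R I :=
  fun i j => Y i j - pivot_col Y i0 i * (pivot_col Y i0 j)^*.

(* Schur complement: minimizing the form over [v + t e_i0] gives
   [sesq Y v v >= |sesq Y e_i0 v|^2 / Y i0 i0]. *)
Lemma peel_psd Y i0 : psd Y -> psd (peel Y i0).
Proof.
move=> psdY v; rewrite -/(sesq _ v v) sesqB sesq_rank1 /pivot_col.
case: eqP => [_|/eqP d_neq0].
  under eq_bigr do rewrite rmorph0 mul0r.
  by rewrite big1 // rmorph0 mul0r subr0; apply: psdY.
set d := Y i0 i0 in d_neq0 *.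
have d_gt0 : 0 < d by rewrite lt_def d_neq0 psd_diag_ge0.
set r := sqrtC d.
have r_gt0 : 0 < r by rewrite sqrtC_gt0.
have rr : r * r = d by rewrite -expr2 sqrtCK.
have r_real : r^* = r by rewrite geC0_conj // ltW.
set s := sesq Y (basisv i0) v.
have -> : \sum_j (Y j i0 / r)^* * v j = s / r.
  rewrite /s sesq_basisl mulr_suml; apply: eq_bigr => j _.
  by rewrite rmorphM fmorphV /= -(psd_adj _ _ psdY) r_real; ring.
have := psdY (fun k => v k + (- (s / d)) * basisv i0 k).
rewrite -/(sesq Y _ _) sesq_shift (sesq_adj v (basisv i0) psdY) -/s -/d.
rewrite rmorphN rmorphM fmorphV /= (geC0_conj (ltW d_gt0)).
have -> : sesq Y v v + - (s / d) * s^* + - (s^* / d) * s + - (s^* / d) * - (s / d) * d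
        = sesq Y v v - (s / r)^* * (s / r).
  by rewrite rmorphM fmorphV /= r_real -rr; field; rewrite gt_eqF.
by [].
Qed.

Lemma peel_pivot Y i0 : psd Y -> peel Y i0 i0 i0 = 0.
Proof.
move=> psdY; rewrite /peel /pivot_col; case: eqP => [->|/eqP d_neq0].
  by rewrite mul0r subr0.
have r_real : (sqrtC (Y i0 i0))^* = sqrtC (Y i0 i0).
  by rewrite geC0_conj // sqrtC_ge0 psd_diag_ge0.
have rr : sqrtC (Y i0 i0) * sqrtC (Y i0 i0) = Y i0 i0 by rewrite -expr2 sqrtCK.
have r_neq0 : sqrtC (Y i0 i0) != 0 by rewrite sqrtC_eq0.
rewrite rmorphM fmorphV /= r_real (geC0_conj (psd_diag_ge0 _ psdY)).
set r := sqrtC _ in rr r_neq0 *.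
by rewrite -rr; field.
Qed.

Lemma peel_diag0 Y i0 i : psd Y -> Y i i = 0 -> peel Y i0 i i = 0.
Proof.
move=> psdY Yii; rewrite /peel /pivot_col Yii (psd_diag0_row psdY Yii i0).
by case: eqP => _; rewrite !mul0r subr0.
Qed.

Definition is_gram X :=
  exists ws : seq (I -> C), forall i j, X i j = \sum_(w <- ws) w i * (w j)^*.

Lemma gram_psd X : is_gram X -> psd X.
Proof.
move=> [ws Xws] v; rewrite -/(sesq X v v).
rewrite (_ : X = fun i j => \sum_(w <- ws) w i * (w j)^*); last first.
  by apply/funext => i; apply/funext => j.
rewrite sesq_sum; apply: sumr_ge0 => w _.
by rewrite sesq_rank1 mulrC mul_conjC_ge0.
Qed.

(* Peel off one pivot column at a time; the support of the diagonal shrinks. *)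
Lemma psd_gram X : psd X -> is_gram X.
Proof.
have diag0_gram Y : psd Y -> (forall i, Y i i = 0) -> is_gram Y.
  by move=> psdY Y0; exists [::] => i j; rewrite big_nil (psd_diag0_row psdY (Y0 i)).
suff: forall n (S : {set I}) Y, (#|S| <= n)%N -> psd Y ->
    (forall i, i \notin S -> Y i i = 0) -> is_gram Y.
  by move=> gen psdX; apply: (gen _ [set: I]) => // i; rewrite inE.
elim=> [|n IHn] S Y cardS psdY offS.
  apply: diag0_gram => // i; apply: offS.
  by move: cardS; rewrite leqn0 cards_eq0 => /eqP ->; rewrite inE.
have [S0 | /set0Pn [i0 i0S]] := eqVneq S finset.set0.
  by apply: diag0_gram => // i; apply: offS; rewrite S0 inE.
have cardS' : (#|S :\ i0| <= n)%N by move: cardS; rewrite (cardsD1 i0) i0S.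
have offS' i : i \notin S :\ i0 -> peel Y i0 i i = 0.
  rewrite !inE negb_and negbK => /orP [/eqP -> | iS]; first exact: peel_pivot.
  by apply: peel_diag0 => //; apply: offS.
have [ws Yws] := IHn _ _ cardS' (peel_psd _ psdY) offS'.
by exists (pivot_col Y i0 :: ws) => i j; rewrite big_cons -Yws /peel; ring.
Qed.

End Sesquilinear.

Section GramClosure.
Variables (R : realType) (I : finType).
Local Notation C := R[i].
Implicit Types (X Y : op R I).

Lemma is_gram_ext X Y : is_gram X -> (forall i j, X i j = Y i j) -> is_gram Y.
Proof. by move=> [ws Xws] XY; exists ws => i j; rewrite -XY. Qed.

Lemma is_gram0 : is_gram (fun _ _ : I => 0 : C).
Proof. by exists [::] => i j; rewrite big_nil. Qed.

Lemma is_gram1 : is_gram (fun _ _ : I => 1 : C).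
Proof. by exists [:: fun _ => 1] => i j; rewrite big_seq1 rmorph1 mulr1. Qed.

Lemma is_gramD X Y : is_gram X -> is_gram Y -> is_gram (fun i j => X i j + Y i j).
Proof.
by move=> [ws1 H1] [ws2 H2]; exists (ws1 ++ ws2) => i j; rewrite big_cat H1 H2.
Qed.

Lemma is_gramM X Y : is_gram X -> is_gram Y -> is_gram (fun i j => X i j * Y i j).
Proof.
move=> [ws1 H1] [ws2 H2].
exists [seq (fun i => w1 i * w2 i) | w1 <- ws1, w2 <- ws2] => i j.
rewrite H1 H2 big_allpairs_dep mulr_suml; apply: eq_bigr => w1 _.
by rewrite mulr_sumr; apply: eq_bigr => w2 _; rewrite rmorphM /=; ring.
Qed.

Lemma is_gramZ (c : C) X : 0 <= c -> is_gram X -> is_gram (fun i j => c * X i j).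
Proof.
move=> c_ge0 [ws Xws]; exists [seq (fun i => sqrtC c * w i) | w <- ws] => i j.
rewrite Xws big_map mulr_sumr; apply: eq_bigr => w _.
have sqrt_real : (sqrtC c)^* = sqrtC c by rewrite geC0_conj ?sqrtC_ge0.
by rewrite rmorphM /= sqrt_real -{1}(sqrtCK c) expr2; ring.
Qed.

Lemma is_gram_tr X : is_gram X -> is_gram (fun i j => X j i).
Proof.
move=> [ws Xws]; exists [seq (fun i => (w i)^*) | w <- ws] => i j.
by rewrite Xws big_map; apply: eq_bigr => w _; rewrite conjCK mulrC.
Qed.

Lemma is_gram_comp (J : finType) (f : J -> I) X :
  is_gram X -> is_gram (fun p q => X (f p) (f q)).
Proof.
by move=> [ws Xws]; exists [seq w \o f | w <- ws] => p q; rewrite Xws big_map.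
Qed.

Lemma is_gram_sum (T : Type) (s : seq T) (P : pred T) (F : T -> op R I) :
  (forall x, P x -> is_gram (F x)) -> is_gram (fun i j => \sum_(x <- s | P x) F x i j).
Proof.
move=> gramF; elim: s => [|a s IHs].
  by apply: is_gram_ext is_gram0 _ => i j; rewrite big_nil.
case Pa: (P a); last by apply: is_gram_ext IHs _ => i j; rewrite big_cons Pa.
by apply: is_gram_ext (is_gramD (gramF a Pa) IHs) _ => i j; rewrite big_cons Pa.
Qed.

Lemma is_gram_prod (T : Type) (s : seq T) (P : pred T) (F : T -> op R I) :
  (forall x, P x -> is_gram (F x)) -> is_gram (fun i j => \prod_(x <- s | P x) F x i j).
Proof.
move=> gramF; elim: s => [|a s IHs].
  by apply: is_gram_ext is_gram1 _ => i j; rewrite big_nil.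
case Pa: (P a); last by apply: is_gram_ext IHs _ => i j; rewrite big_cons Pa.
by apply: is_gram_ext (is_gramM (gramF a Pa) IHs) _ => i j; rewrite big_cons Pa.
Qed.

End GramClosure.

Lemma sum_pair (R : nmodType) (I J : finType) (F : I * J -> R) :
  \sum_p F p = \sum_i \sum_j F (i, j).
Proof. by rewrite pair_bigA; apply: eq_bigr => -[]. Qed.

Section LinearChannel.
Variables (R : realType) (dA dB : nat) (N : chan R dA dB).
Hypothesis linN : is_linear_map N.
Implicit Types (X Y : op R 'I_dA).

Lemma linear_chan0 : N (fun _ _ => 0) = (fun _ _ => 0).
Proof.
have := linN (-1) (fun _ _ => 0) (fun _ _ => 0).
rewrite (_ : (fun _ _ => -1 * 0 + 0) = fun _ _ => 0); last first.
  by apply/funext => i; apply/funext => j; rewrite mulr0 addr0.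
move=> N0; apply/funext => i; apply/funext => j.
by have /= := congr1 (fun Z => Z i j) N0; rewrite mulN1r addNr.
Qed.

Lemma linear_chanZ c X : N (fun i j => c * X i j) = (fun i j => c * N X i j).
Proof.
have := linN c X (fun _ _ => 0); rewrite linear_chan0.
rewrite (_ : (fun i j => c * X i j + 0) = fun i j => c * X i j); last first.
  by apply/funext => i; apply/funext => j; rewrite addr0.
by move=> ->; apply/funext => i; apply/funext => j; rewrite addr0.
Qed.

Lemma linear_chanD X Y : N (fun i j => X i j + Y i j) = (fun i j => N X i j + N Y i j).
Proof.
have := linN 1 X Y.
rewrite (_ : (fun i j => 1 * X i j + Y i j) = fun i j => X i j + Y i j); last first.
  by apply/funext => i; apply/funext => j; rewrite mul1r.
by move=> ->; apply/funext => i; apply/funext => j; rewrite mul1r.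
Qed.

Lemma linear_chan_sum (T : Type) (s : seq T) (E : T -> op R 'I_dA) :
  N (fun i j => \sum_(t <- s) E t i j) = (fun i j => \sum_(t <- s) N (E t) i j).
Proof.
elim: s => [|t s IHs].
  rewrite (_ : (fun i j => _) = fun _ _ => 0) ?linear_chan0; last first.
    by apply/funext => i; apply/funext => j; rewrite big_nil.
  by apply/funext => i; apply/funext => j; rewrite big_nil.
rewrite (_ : (fun i j => _) = fun i j => E t i j + \sum_(t <- s) E t i j); last first.
  by apply/funext => i; apply/funext => j; rewrite big_cons.
by rewrite linear_chanD IHs; apply/funext => i; apply/funext => j; rewrite big_cons.
Qed.

(* Expand [X] in matrix units [|a><a'|], whose images make up the Choi operator. *)
Lemma linear_choiE X b b' :
  N X b b' = \sum_a \sum_a' X a a' * choi N (a, b) (a', b').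
Proof.
have X_units : X = fun i j => \sum_a \sum_a' X a a' * ((i == a) && (j == a'))%:R.
  apply/funext => i; apply/funext => j; symmetry.
  rewrite (bigD1 i) //= (bigD1 j) //= !eqxx mulr1.
  rewrite [X in _ + X = _]big1 ?addr0 => [|a /negbTE nai]; last first.
    by rewrite big1 // => a' _; rewrite eq_sym nai mulr0.
  by rewrite big1 ?addr0 // => a' /negbTE naj; rewrite eq_sym naj andbF mulr0.
rewrite {1}X_units (linear_chan_sum _
  (fun a i j => \sum_a' X a a' * ((i == a) && (j == a'))%:R)).
apply: eq_bigr => a _.
rewrite (linear_chan_sum _ (fun a' i j => X a a' * ((i == a) && (j == a'))%:R)).
apply: eq_bigr => a' _.
by rewrite linear_chanZ.
Qed.

Lemma trace_choi (L : op R 'I_dB) X :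
  optr (opmul (fun p q : 'I_dA * 'I_dB => X q.1 p.1 * L p.2 q.2) (choi N)) =
  optr (opmul L (N X)).
Proof.
rewrite /optr /opmul sum_pair; under eq_bigr do under eq_bigr do rewrite sum_pair.
rewrite exchange_big /=; under eq_bigr do rewrite exchange_big /=.
under eq_bigr do under eq_bigr do rewrite exchange_big /=.
under eq_bigr do rewrite exchange_big /=.
apply: eq_bigr => c _; apply: eq_bigr => c' _.
rewrite linear_choiE mulr_sumr; apply: eq_bigr => a' _.
by rewrite mulr_sumr; apply: eq_bigr => a _; rewrite /= mulrCA mulrA.
Qed.

End LinearChannel.

Lemma cp_psd (R : realType) (dA dB : nat) (N : chan R dA dB) (X : op R 'I_dA) :
  completely_positive N -> psd X -> psd (N X).
Proof.
move=> cpN psdX.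
have psdX1 : psd (fun p q : 'I_1 * 'I_dA => X p.2 q.2).
  exact: gram_psd (is_gram_comp snd (psd_gram psdX)).
exact: gram_psd (is_gram_comp (fun b : 'I_dB => (ord0 : 'I_1, b))
                                (psd_gram (cpN 1%N _ psdX1))).
Qed.

Lemma conj_id_rC (R : realType) (z : R[i]) : z^* = z -> z = rC (complex.Re z).
Proof.
case: z => a b [] /eqP; rewrite -subr_eq0 -opprD oppr_eq0 -mulr2n mulrn_eq0 /=.
by move=> /eqP ->.
Qed.

Lemma optr_mul_psd_conj (R : realType) (I : finType) (X Y : op R I) :
  psd X -> psd Y -> (optr (opmul X Y))^* = optr (opmul X Y).
Proof.
move=> psdX psdY; rewrite /optr /opmul rmorph_sum exchange_big /=.
apply: eq_bigr => l _; rewrite rmorph_sum; apply: eq_bigr => i _.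
by rewrite rmorphM /= -(psd_adj _ _ psdX) -(psd_adj _ _ psdY) mulrC.
Qed.

Lemma optr_mul_suml (R : realType) (I : finType) (T : Type) (s : seq T)
    (P : pred T) (F : T -> op R I) (G : op R I) :
  optr (opmul (fun p q => \sum_(x <- s | P x) F x p q) G) =
  \sum_(x <- s | P x) optr (opmul (F x) G).
Proof.
rewrite /optr /opmul [RHS]exchange_big /=; apply: eq_bigr => p _.
by rewrite [RHS]exchange_big /=; apply: eq_bigr => l _; rewrite mulr_suml.
Qed.

Lemma optr_mulZl (R : realType) (I : finType) (c : R[i]) (X G : op R I) :
  optr (opmul (fun p q => c * X p q) G) = c * optr (opmul X G).
Proof.
rewrite /optr /opmul mulr_sumr; apply: eq_bigr => p _.
by rewrite mulr_sumr; apply: eq_bigr => l _; rewrite mulrA.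
Qed.

Lemma povm_trace_sum (R : realType) (dB M : nat) (Lam : 'I_M -> op R 'I_dB)
    (Y : op R 'I_dB) :
  is_povm Lam -> \sum_x optr (opmul (Lam x) Y) = optr Y.
Proof.
move=> [_ Lam_sum]; rewrite /optr /opmul exchange_big /=; apply: eq_bigr => i _.
rewrite exchange_big /=; under eq_bigr do rewrite -mulr_suml Lam_sum /opI eq_sym.
exact: sum_deltal.
Qed.

(* Decoding message [x] fails with probability [1 - tr(Lam x N(rho x))] by the
   POVM completeness relation and trace preservation. *)
Lemma perr_success_ge (R : realType) (dA dB M : nat) (N : chan R dA dB)
    (rho : 'I_M -> op R 'I_dA) (Lam : 'I_M -> op R 'I_dB) (eps : R) (x : 'I_M) :
  trace_preserving N -> is_state (rho x) -> is_povm Lam ->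
  perr N rho Lam <= eps -> 1 - eps <= complex.Re (optr (opmul (Lam x) (N (rho x)))).
Proof.
move=> tpN [_ tr_rho] povm perr_le.
have fail_x : \sum_(xh | xh != x) optr (opmul (Lam xh) (N (rho x))) =
              1 - optr (opmul (Lam x) (N (rho x))).
  rewrite -tr_rho -tpN -(povm_trace_sum _ povm).
  by rewrite [in RHS](bigD1 x) //= addrAC subrr add0r.
have : complex.Re (1 - optr (opmul (Lam x) (N (rho x)))) <= eps.
  apply: le_trans perr_le; rewrite -fail_x /perr.
  exact: (le_bigmax 0 (fun x0 => complex.Re (\sum_(xh | xh != x0)
         optr (opmul (Lam xh) (N (rho x0))))) x).
by rewrite raddfB /=; lra.
Qed.

Section IndicatorProducts.
Variables (S : comPzSemiRingType) (k n : nat).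
Implicit Types b : {ffun 'I_k -> 'I_n}.

Lemma prod_eq_cond (P : pred 'I_k) b b' :
  \prod_(j | P j) ((b j == b' j)%:R : S) = [forall j, P j ==> (b j == b' j)]%:R.
Proof.
have [/forallP allP|] := boolP [forall j, P j ==> (b j == b' j)].
  by rewrite big1 // => j Pj; move: (allP j); rewrite Pj => /eqP ->; rewrite eqxx.
rewrite negb_forall => /existsP [j]; rewrite negb_imply => /andP [Pj /negbTE bj].
by rewrite (bigD1 j) //= bj mul0r.
Qed.

Lemma prod_eq_ffun b b' : \prod_j ((b j == b' j)%:R : S) = (b == b')%:R.
Proof.
rewrite prod_eq_cond; congr (nat_of_bool _)%:R.
apply/forallP/eqP => [eqb | -> j]; last by rewrite eqxx.
by apply/ffunP => j; apply/eqP; apply: eqb.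
Qed.

Lemma prod_if_eq (j1 : 'I_k) (F G : 'I_k -> S) :
  \prod_j (if j == j1 then F j else G j) = F j1 * \prod_(j | j != j1) G j.
Proof.
by rewrite (bigD1 j1) //= eqxx; congr (_ * _); apply: eq_bigr => j /negbTE ->.
Qed.

Lemma sum_ffun2_prod (F : 'I_k -> 'I_n -> 'I_n -> S) :
  \sum_(b : {ffun 'I_k -> 'I_n}) \sum_(b' : {ffun 'I_k -> 'I_n})
    \prod_j F j (b j) (b' j) =
  \prod_j \sum_c \sum_c' F j c c'.
Proof.
by rewrite bigA_distr_bigA /=; apply: eq_bigr => b _; rewrite bigA_distr_bigA.
Qed.

End IndicatorProducts.

Section Ampliation.
Variables (R : realType) (dA dB k : nat) (j0 : 'I_k).
Local Notation C := R[i].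

(* [Z] acting on [A B_(j0)], tensored with the identity on the other [B_j]. *)
Definition ampl (Z : op R ('I_dA * 'I_dB)%type) : op R ('I_dA * Bk k dB)%type :=
  fun p q => Z (p.1, p.2 j0) (q.1, q.2 j0)
             * [forall j, (j != j0) ==> (p.2 j == q.2 j)]%:R.

Lemma trace_ampl (Z W : op R ('I_dA * 'I_dB)%type) :
  optr (opmul (ampl Z) (ampl W)) = dB%:R ^+ k.-1 * optr (opmul Z W).
Proof.
pose H a a' j (c c' : 'I_dB) : C := if j == j0
  then Z (a, c) (a', c') * W (a', c') (a, c) else (c == c')%:R * (c' == c)%:R.
have factor a a' (b b' : Bk k dB) :
    ampl Z (a, b) (a', b') * ampl W (a', b') (a, b) = \prod_j H a a' j (b j) (b' j).
  by rewrite /ampl /= prod_if_eq -!prod_eq_cond big_split /= mulrACA.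
have sum_H a a' : \prod_j \sum_c \sum_c' H a a' j c c' =
    (\sum_c \sum_c' Z (a, c) (a', c') * W (a', c') (a, c)) * dB%:R ^+ k.-1.
  rewrite (eq_bigr (fun j => if j == j0 then \sum_c \sum_c'
              Z (a, c) (a', c') * W (a', c') (a, c) else dB%:R)); last first.
    move=> j _; rewrite /H; case: (j == j0) => //.
    under eq_bigr do rewrite sum_deltar eqxx.
    by rewrite sumr_const card_ord.
  rewrite prod_if_eq; congr (_ * _).
  rewrite -[k in RHS]card_ord -(cardC1 j0) -prodr_const.
  by apply: eq_bigl => j; rewrite inE.
rewrite /optr /opmul sum_pair; under eq_bigr do under eq_bigr do rewrite sum_pair.
under eq_bigr do rewrite exchange_big /=.
under eq_bigr do under eq_bigr do rewrite (eq_bigr _ (fun b _ => eq_bigr _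
  (fun b' _ => factor _ _ b b'))) sum_ffun2_prod sum_H.
rewrite sum_pair mulr_sumr; apply: eq_bigr => a _.
rewrite -mulr_suml mulrC; congr (_ * _).
by under [RHS]eq_bigr do rewrite sum_pair; rewrite exchange_big.
Qed.

End Ampliation.

Section CodeToSdp.
Variables (R : realType) (dA dB M k : nat) (N : chan R dA dB).
Variables (rho : 'I_M -> op R 'I_dA) (Lam : 'I_M -> op R 'I_dB).
Hypotheses (dB_gt0 : (0 < dB)%N) (M_gt0 : (0 < M)%N) (k_gt0 : (0 < k)%N).
Hypotheses (rho_state : forall x, is_state (rho x)) (povm : is_povm Lam).
Hypothesis chanN : is_channel N.
Local Notation C := R[i].

Definition test_op (x : 'I_M) (c : bool) : op R 'I_dB :=
  fun b b' => if c then opI R b b' - Lam x b b' else Lam x b b'.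

(* [Q^y = 1/M sum_x rho_x^T (x) T_x^(y_1) (x) ... (x) T_x^(y_k)] with
   [T_x^c = test_op x c]; [false] stands for the outcome 0. *)
Definition code_Q (y : Yk k) : op R ('I_dA * Bk k dB)%type :=
  fun p q => M%:R^-1 * \sum_x rho x q.1 p.1 * \prod_j test_op x (y j) (p.2 j) (q.2 j).

Definition code_rho : op R 'I_dA := fun a a' => M%:R^-1 * \sum_x rho x a' a.

Let invM_ge0 : 0 <= (M%:R : C)^-1. Proof. by rewrite invr_ge0 ler0n. Qed.
Let j0 : 'I_k := Ordinal k_gt0.
Let jk_lt : (k.-1 < k)%N. Proof. by rewrite ltn_predL. Qed.
Let jk : 'I_k := Ordinal jk_lt.
Let linN : is_linear_map N. Proof. by case: chanN. Qed.

Lemma test_op_sum x b b' : \sum_c test_op x c b b' = opI R b b'.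
Proof. by rewrite big_bool /test_op /=; ring. Qed.

Lemma test_op_gram x c : is_gram (test_op x c).
Proof.
case: c; last exact: psd_gram (povm.1 x).
apply: is_gram_ext (is_gram_sum (index_enum _) (P := fun x' => x' != x)
         (fun x' _ => psd_gram (povm.1 x'))) _ => b b'.
by rewrite /test_op -(povm.2 b b') [in RHS](bigD1 x) //= addrC addrK.
Qed.

Lemma test_op_coord_gram x c (j : 'I_k) :
  is_gram (fun p q : 'I_dA * Bk k dB => test_op x c (p.2 j) (q.2 j)).
Proof. exact: (is_gram_comp (fun p : 'I_dA * Bk k dB => p.2 j) (test_op_gram x c)). Qed.

Lemma code_rho_state : is_state code_rho.
Proof.
split.
  apply/gram_psd/(is_gramZ invM_ge0)/is_gram_sum => x _.
  exact/is_gram_tr/psd_gram/(rho_state x).1.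
rewrite /optr /code_rho -mulr_sumr exchange_big /=.
rewrite (eq_bigr (fun _ => 1)) => [|x _]; last exact: (rho_state x).2.
by rewrite sumr_const card_ord mulVf // pnatr_eq0 -lt0n.
Qed.

Lemma code_Q_sum p q : \sum_y code_Q y p q = code_rho p.1 q.1 * (p.2 == q.2)%:R.
Proof.
rewrite /code_Q -mulr_sumr /code_rho -mulrA; congr (_ * _).
rewrite exchange_big mulr_suml; apply: eq_bigr => x _ /=.
rewrite -mulr_sumr -prod_eq_ffun; congr (_ * _).
rewrite -(bigA_distr_bigA (fun j c => test_op x c (p.2 j) (q.2 j))) /=.
by apply: eq_bigr => j _; rewrite test_op_sum.
Qed.

Lemma avg_state_prod_gram (G : 'I_M -> 'I_k -> op R ('I_dA * Bk k dB)%type) :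
  (forall x j, is_gram (G x j)) ->
  is_gram (fun p q => M%:R^-1 * \sum_x rho x q.1 p.1 * \prod_j G x j p q).
Proof.
move=> gramG; apply/(is_gramZ invM_ge0)/is_gram_sum => x _.
have gram_rhoT := is_gram_comp (fst : 'I_dA * Bk k dB -> 'I_dA)
                               (is_gram_tr (psd_gram (rho_state x).1)).
exact: is_gramM gram_rhoT (is_gram_prod (index_enum _) (fun j _ => gramG x j)).
Qed.

Lemma code_Q_psd y : psd (code_Q y).
Proof.
apply/gram_psd/(avg_state_prod_gram
  (G := fun x j p q => test_op x (y j) (p.2 j) (q.2 j))) => x j.
exact: test_op_coord_gram.
Qed.

Lemma WpermA_conj (pi : {perm 'I_k}) (X : op R ('I_dA * Bk k dB)%type) p q :
  opmul (opmul (@WpermA R dA k dB pi) X) (opadj (@WpermA R dA k dB pi)) p q =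
  X (p.1, [ffun j => p.2 (pi j)]) (q.1, [ffun j => q.2 (pi j)]).
Proof.
have unit_pair a (b : Bk k dB) (l : 'I_dA * Bk k dB) :
    ((a == l.1)%:R * (l.2 == b)%:R : C) = (l == (a, b))%:R.
  by case: l => a' b' /=; rewrite xpair_eqE (eq_sym a) -natrM mulnb.
rewrite /opmul /opadj /WpermA /Wperm.
under eq_bigr do rewrite unit_pair rmorph_nat.
rewrite sum_deltar; under eq_bigr do rewrite unit_pair.
exact: sum_deltal.
Qed.

Lemma code_Q_perm (pi : {perm 'I_k}) y :
  opmul (opmul (@WpermA R dA k dB pi) (code_Q (permy pi y)))
        (opadj (@WpermA R dA k dB pi)) = code_Q y.
Proof.
apply/funext => p; apply/funext => q; rewrite WpermA_conj /code_Q /=.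
congr (_ * _); apply: eq_bigr => x _; congr (_ * _).
under eq_bigr do rewrite !ffunE.
by rewrite [RHS](reindex_inj (@perm_inj _ pi)).
Qed.

Lemma code_Q_ptrans_psd i y : psd (ptrans i (code_Q y)).
Proof.
pose G x (j : 'I_k) (p q : 'I_dA * Bk k dB) :=
  if (j < i)%N then test_op x (y j) (q.2 j) (p.2 j)
  else test_op x (y j) (p.2 j) (q.2 j).
have gramG x j : is_gram (G x j).
  rewrite /G; case: (j < i)%N; last exact: test_op_coord_gram.
  exact: is_gram_tr (test_op_coord_gram x (y j) j).
apply/gram_psd/(is_gram_ext (avg_state_prod_gram gramG)) => p q.
rewrite /ptrans /code_Q /=; congr (_ * _); apply: eq_bigr => x _; congr (_ * _).
by apply: eq_bigr => j _; rewrite /G !ffunE; case: ifP.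
Qed.


Lemma sum_family_code_Q (P : 'I_k -> pred bool) p q :
  \sum_(y | y \in family P) code_Q y p q =
  M%:R^-1 * \sum_x rho x q.1 p.1 * \prod_j \sum_(c | P j c) test_op x c (p.2 j) (q.2 j).
Proof.
rewrite /code_Q -mulr_sumr exchange_big /=; congr (_ * _); apply: eq_bigr => x _.
by rewrite -mulr_sumr (bigA_distr_big_dep P (fun j c => test_op x c (p.2 j) (q.2 j))).
Qed.

Lemma sum_family_trA_code_Q (P : 'I_k -> pred bool) b b' :
  \sum_(y | y \in family P) trA (code_Q y) b b' =
  M%:R^-1 * \sum_x \prod_j \sum_(c | P j c) test_op x c (b j) (b' j).
Proof.
rewrite /trA exchange_big /=; under eq_bigr do rewrite sum_family_code_Q /=.
rewrite -mulr_sumr exchange_big /=; congr (_ * _); apply: eq_bigr => x _.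
by rewrite -mulr_suml -[\sum_a rho x a a]/(optr (rho x)) (rho_state x).2 mul1r.
Qed.

Let val_eq_j0 (j : 'I_k) : (val j == 0%N) = (j == j0).
Proof. by rewrite -(inj_eq val_inj). Qed.

Let val_eq_jk (j : 'I_k) : (val j == k.-1) = (j == jk).
Proof. by rewrite -(inj_eq val_inj). Qed.

Let first0_family y : first0 y = (y \in family (fun j c => (j != j0) || ~~ c)).
Proof.
by apply/forallP/familyP => y0 j; move: (y0 j); rewrite val_eq_j0 unfold_in;
  case: (j == j0).
Qed.

Let sum_first0_test x j b b' :
  \sum_(c | (j != j0) || ~~ c) test_op x c b b' =
  if j == j0 then Lam x b b' else opI R b b'.
Proof.
rewrite big_mkcond big_bool /=.
by case: (j == j0) => /=; rewrite ?addr0 ?add0r // /test_op; ring.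
Qed.

Lemma sum_first0_trA_code_Q b b' :
  \sum_(y | first0 y) trA (code_Q y) b b' = M%:R^-1 * opI R b b'.
Proof.
rewrite (eq_bigl _ _ first0_family) sum_family_trA_code_Q; congr (_ * _).
under eq_bigr do under eq_bigr do rewrite sum_first0_test.
under eq_bigr do rewrite prod_if_eq.
rewrite -mulr_suml (povm.2 (b j0) (b' j0)) /opI -prod_eq_ffun.
by rewrite [in RHS](bigD1 j0).
Qed.

Lemma code_Q_ople :
  ople (fun b b' => \sum_(y | first0 y) trA (code_Q y) b b')
       (fun b b' => rC (M%:R^-1) * opI R b b').
Proof.
apply: psd_eq0 => b b'.
by rewrite sum_first0_trA_code_Q /rC fmorphV rmorph_nat subrr.
Qed.

Let agree_family y y' :
  agree_but_last y y' = (y' \in family (fun j c => (j == jk) || (c == y j))).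
Proof.
by apply/forallP/familyP => agree j; move: (agree j); rewrite val_eq_jk unfold_in;
  case: (j == jk) => //=; rewrite eq_sym.
Qed.

Let sum_agree_test x y j b b' :
  \sum_(c | (j == jk) || (c == y j)) test_op x c b b' =
  if j == jk then opI R b b' else test_op x (y j) b b'.
Proof.
case: (j == jk) => /=; first exact: test_op_sum.
exact: (big_pred1_eq _ (y j) (fun c => test_op x c b b')).
Qed.

Let eqlast_jk (b b' : Bk k dB) : eqlast b b' = (b jk == b' jk).
Proof.
apply/forallP/idP => [/(_ jk)|eq_jk j]; first by rewrite val_eq_jk eqxx.
by rewrite val_eq_jk; apply/implyP => /eqP ->.
Qed.

Lemma sum_agree_trA_code_Q y (b b' : Bk k dB) :
  \sum_(y' | agree_but_last y y') trA (code_Q y') b b' =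
  M%:R^-1 * \sum_x (opI R (b jk) (b' jk) *
                     \prod_(j | j != jk) test_op x (y j) (b j) (b' j)).
Proof.
rewrite (eq_bigl _ _ (agree_family y)) sum_family_trA_code_Q; congr (_ * _).
by apply: eq_bigr => x _; under eq_bigr do rewrite sum_agree_test; rewrite prod_if_eq.
Qed.

Lemma code_Q_marginal y (b b' : Bk k dB) :
  \sum_(y' | agree_but_last y y') trA (code_Q y') b b' =
  (dB%:R)^-1 *
    (\sum_(y' | agree_but_last y y')
       \sum_(a : 'I_dA) \sum_(c : 'I_dB) code_Q y' (a, setlast b c) (a, setlast b' c))
    * (eqlast b b')%:R.
Proof.
have -> : \sum_(y' | agree_but_last y y')
    \sum_(a : 'I_dA) \sum_(c : 'I_dB) code_Q y' (a, setlast b c) (a, setlast b' c) =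
    \sum_c \sum_(y' | agree_but_last y y') trA (code_Q y') (setlast b c) (setlast b' c).
  by rewrite /trA; under eq_bigr do rewrite exchange_big /=; rewrite exchange_big.
under [in RHS]eq_bigr do rewrite sum_agree_trA_code_Q.
have setlastE c x : opI R (setlast b c jk) (setlast b' c jk) *
    \prod_(j | j != jk) test_op x (y j) (setlast b c j) (setlast b' c j) =
    \prod_(j | j != jk) test_op x (y j) (b j) (b' j).
  rewrite /setlast !ffunE val_eq_jk eqxx /opI eqxx mul1r.
  by apply: eq_bigr => j /negbTE nj; rewrite !ffunE val_eq_jk nj.
under [in RHS]eq_bigr do under eq_bigr do rewrite setlastE.
rewrite sum_agree_trA_code_Q eqlast_jk sumr_const card_ord /opI.
rewrite -mulr_sumr -[_ *+ dB]mulr_natr.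
by field; rewrite !pnatr_eq0 -!lt0n dB_gt0 M_gt0.
Qed.

Lemma sum_first0_code_Q p q :
  \sum_(y | first0 y) code_Q y p q =
  ampl j0 (fun p q => M%:R^-1 * \sum_x rho x q.1 p.1 * Lam x p.2 q.2) p q.
Proof.
rewrite (eq_bigl _ _ first0_family) sum_family_code_Q /ampl /= -mulrA.
congr (_ * _); rewrite mulr_suml; apply: eq_bigr => x _; rewrite -mulrA.
congr (_ * _); under eq_bigr do rewrite sum_first0_test.
by rewrite prod_if_eq /opI prod_eq_cond.
Qed.

Lemma choi_ext_ampl : choi_ext N = ampl j0 (choi N).
Proof.
apply/funext => p; apply/funext => q.
rewrite /choi_ext /ampl (eq_bigl _ _ val_eq_j0) big_pred1_eq.
by congr (_ * _%:R); apply: eq_forallb => j; rewrite val_eq_j0.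
Qed.

Lemma code_Q_success :
  \sum_(y | first0 y) optr (opmul (code_Q y) (choi_ext N)) =
  dB%:R ^+ k.-1 * (M%:R^-1 * \sum_x optr (opmul (Lam x) (N (rho x)))).
Proof.
rewrite -optr_mul_suml (funext (fun p => funext (sum_first0_code_Q p))).
rewrite choi_ext_ampl trace_ampl optr_mulZl optr_mul_suml.
by under eq_bigr do rewrite (trace_choi linN).
Qed.

Lemma code_Q_success_ge eps : perr N rho Lam <= eps ->
  rC (1 - eps) <= ((dB%:R) ^+ k.-1)^-1 *
     \sum_(y | first0 y) optr (opmul (code_Q y) (choi_ext N)).
Proof.
move=> perr_le; have [_ tpN cpN] := chanN.
have tau_real x : optr (opmul (Lam x) (N (rho x))) =
                  rC (complex.Re (optr (opmul (Lam x) (N (rho x))))).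
  apply/conj_id_rC/optr_mul_psd_conj; first exact: povm.1.
  exact: cp_psd cpN (rho_state x).1.
rewrite code_Q_success mulKf ?expf_neq0 ?pnatr_eq0 -?lt0n //.
under eq_bigr do rewrite tau_real.
have -> : (M%:R : C)^-1 = rC (M%:R^-1) by rewrite /rC fmorphV rmorph_nat.
rewrite /rC -rmorph_sum -rmorphM lecR ler_pdivlMl ?ltr0n //.
rewrite mulr_natl -[M in _ *+ M]card_ord -sumr_const.
by apply: ler_sum => x _; exact: perr_success_ge tpN (rho_state x) povm perr_le.
Qed.

Lemma code_feasible eps :
  perr N rho Lam <= eps -> sdp_feasible N eps (M%:R^-1) code_rho code_Q.
Proof.
move=> perr_le; do !split.
- exact: code_Q_sum.
- exact: code_Q_psd.
- exact: code_Q_perm.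
- by move=> i y _; exact: code_Q_ptrans_psd.
- exact: code_Q_ople.
- exact: code_Q_marginal.
- exact: code_Q_success_ge.
Qed.

End CodeToSdp.

Lemma log2_le_oppe_elog2 (R : realType) (M : nat) (s : \bar R) :
  (0 < M)%N -> (s <= (M%:R^-1)%:E)%E -> ((log2 M%:R)%:E <= - elog2 s)%E.
Proof.
move=> M_gt0; case: s => [r||] //= r_le; last by rewrite leey.
case: ifP => r_gt0; last by rewrite leey.
have M_pos : (0 < M%:R :> R) by rewrite ltr0n.
have ln2_gt0 : (0 < ln (2 : R)) by rewrite ln_gt0 // ltr1n.
rewrite lee_fin /log2 -mulNr ler_pM2r ?invr_gt0 // -lnV ?posrE //.
by rewrite ler_ln ?posrE ?invr_gt0 // -[M%:R]invrK lef_pV2 ?posrE ?invr_gt0 // -lee_fin.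
Qed.

Theorem theorem1 (R : realType) (dA dB : nat) (N : chan R dA dB) (eps : R)
    (k : nat) :
  (0 < dA)%N -> (0 < dB)%N -> is_channel N -> 0 <= eps <= 1 -> (1 <= k)%N ->
  (one_shot_capacity N eps <= - elog2 (sdp_inf N eps k))%E.
Proof.
move=> _ dB_gt0 chanN _ k_gt0.
apply: ge_ereal_sup => _ [M [rho [Lam [M_gt0 rho_state povm perr_le ->]]]].
apply: (@log2_le_oppe_elog2 _ M) => //; apply: ereal_inf_lbound.
exists M%:R^-1, (code_rho rho), (code_Q (k := k) rho Lam); split.
- by rewrite invr_ge0 ler0n.
- exact: code_rho_state.
- exact: code_feasible.
- by [].
Qed.
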